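(* In the multispectral 2D Toda setting described in the context, let $Z_1(t)$ and $Z_2(t)$ be semi-infinite matrices such that $Z_1(t)\big(W^{(0)}_1(t_1)\big)^{-1}$ is block strictly lower triangular, $Z_2(t)\big(W^{(0)}_2(t_2)\big)^{-\top}$ is block upper triangular, and $Z_1(t)G=Z_2(t)$. Then $Z_1(t)=0$ and $Z_2(t)=0$.
   Context: Multi-indices ordered by graded lexicographic order; semi-infinite matrices partitioned in blocks indexed by $[k]=\{\boldsymbol\alpha\in\mathbb Z_+^D:|\boldsymbol\alpha|=k\}$. Spectral matrices $(\Lambda_a)_{\boldsymbol\alpha,\boldsymbol\beta}=\delta_{\boldsymbol\alpha+\boldsymbol e_a,\boldsymbol\beta}$, $\boldsymbol\Lambda^{\boldsymbol\alpha}=\Lambda_1^{\alpha_1}\cdots\Lambda_D^{\alpha_D}$. $G$ is a semi-infinite complex matrix; times $t_i=(t_{i,\boldsymbol\alpha})_{\boldsymbol\alpha\in\mathbb Z_+^D}$, $i=1,2$; $W^{(0)}_i(t_i)=\exp\big(\sum_{\boldsymbol\alpha}t_{i,\boldsymbol\alpha}\boldsymbol\Lambda^{\boldsymbol\alpha}\big)$; $G(t)=W_1^{(0)}(t_1)G\big(W_2^{(0)}(t_2)\big)^{-\top}$ is assumed to admit a block Gauss–Borel factorization $G(t)=S_1(t)^{-1}H(t)S_2(t)^{-\top}$ with $S_i$ block lower unitriangular and $H$ block diagonal. *)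

From HB Require Import structures.
From mathcomp Require Import all_boot all_order all_algebra.
From mathcomp Require Import complex.
From mathcomp Require Import all_classical all_reals all_analysis.
Set Implicit Arguments. Unset Strict Implicit. Unset Printing Implicit Defensive.
Import Order.TTheory GRing.Theory Num.Theory.
Import numFieldNormedType.Exports.
Local Open Scope ring_scope.
Local Open Scope classical_set_scope.

(* The complex numbers C = R[i], R a real-number type, viewed as a numFieldType
   (norm = modulus, hence the usual topology of C). *)
Definition Cx (R : realType) : numFieldType := R[i].

Definition mi (D : nat) := {ffun 'I_D -> nat}.

Definition mdeg D (a : mi D) : nat := (\sum_(i < D) a i)%N.

Definition madd D (a b : mi D) : mi D := [ffun i => (a i + b i)%N].

(* Semi-infinite complex matrices, entries indexed by pairs of multi-indices;
   the block [k] consists of the multi-indices of degree k. *)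
Definition smat (R : realType) (D : nat) := mi D -> mi D -> Cx R.

(* Finite partial sum over all multi-indices delta with |delta| <= N
   (i.e. over the blocks [0], ..., [N]). *)
Definition bsum (R : realType) D (N : nat) (F : mi D -> Cx R) : Cx R :=
  \sum_(f : {ffun 'I_D -> 'I_N.+1} | (\sum_(i < D) (f i : nat) <= N)%N)
     F [ffun i => (f i : nat)].

Definition blocksum (R : realType) D (k : nat) (F : mi D -> Cx R) : Cx R :=
  \sum_(f : {ffun 'I_D -> 'I_k.+1} | (\sum_(i < D) (f i : nat) == k)%N)
     F [ffun i => (f i : nat)].

(* Matrix product of semi-infinite matrices: (A B)_{b,c} = sum_d A_{b,d} B_{d,c},
   the series being summed block by block (partial sums over |d| <= N).
   [mmul_to A B P] : the product A B exists (all these series converge) and equals P. *)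
Definition mmul_to (R : realType) D (A B P : smat R D) : Prop :=
  forall b c, (fun N => bsum N (fun d => A b d * B d c)) @ \oo --> P b c.

Definition mmul (R : realType) D (A B : smat R D) : smat R D :=
  fun b c => limn (fun N => bsum N (fun d => A b d * B d c)).

Definition mtr (R : realType) D (A : smat R D) : smat R D := fun b c => A c b.
Definition sone (R : realType) D : smat R D := fun b c => (b == c)%:R.
Definition szero (R : realType) D : smat R D := fun _ _ => 0.
Arguments sone R D : clear implicits.
Arguments szero R D : clear implicits.
Definition mopp (R : realType) D (A : smat R D) : smat R D := fun b c => - A b c.

Fixpoint mpow (R : realType) D (A : smat R D) (n : nat) : smat R D :=
  if n is n'.+1 then mmul (mpow A n') A else sone R D.

Definition mexp (R : realType) D (A : smat R D) : smat R D :=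
  fun b c => limn (fun n => \sum_(k < n) mpow A k b c / (k`!)%:R).

(* Spectral matrices: (Lambda^alpha)_{b,c} = delta_{b + alpha, c}
   (= Lambda_1^{alpha_1} ... Lambda_D^{alpha_D}, (Lambda_a)_{b,c} = delta_{b+e_a,c}). *)
Definition Lam (R : realType) D (a : mi D) : smat R D :=
  fun b c => (madd b a == c)%:R.

Definition tLam (R : realType) D (t : mi D -> Cx R) : smat R D :=
  fun b c => limn (fun N => bsum N (fun a => t a * Lam R a b c)).

Definition W0 (R : realType) D (t : mi D -> Cx R) : smat R D := mexp (tLam t).
Definition W0inv (R : realType) D (t : mi D -> Cx R) : smat R D :=
  mexp (mopp (tLam t)).

Definition block_lower (R : realType) D (A : smat R D) : Prop :=
  forall b c, (mdeg b < mdeg c)%N -> A b c = 0.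
Definition block_strictly_lower (R : realType) D (A : smat R D) : Prop :=
  forall b c, (mdeg b <= mdeg c)%N -> A b c = 0.
Definition block_upper (R : realType) D (A : smat R D) : Prop :=
  forall b c, (mdeg c < mdeg b)%N -> A b c = 0.
Definition block_diagonal (R : realType) D (A : smat R D) : Prop :=
  forall b c, mdeg b != mdeg c -> A b c = 0.
Definition block_lower_unitri (R : realType) D (A : smat R D) : Prop :=
  block_lower A /\ forall b c, mdeg b = mdeg c -> A b c = (b == c)%:R.

Definition block_diag_invertible (R : realType) D (H : smat R D) : Prop :=
  block_diagonal H /\
  exists K : smat R D, block_diagonal K /\
    (forall b c, mdeg b = mdeg c ->
       blocksum (mdeg b) (fun d => H b d * K d c) = (b == c)%:R) /\
    (forall b c, mdeg b = mdeg c ->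
       blocksum (mdeg b) (fun d => K b d * H d c) = (b == c)%:R).

(* W0(t) = exp(t_0 I + N), where N := sum_(alpha <> 0) t_alpha Lambda^alpha is block strictly
   upper triangular because Lambda^alpha raises the degree by |alpha|.  Hence
   W0(t) = e^(t_0) sum_j N^j / j! is block upper triangular with finite entries, and
   W0(t)^-1 W0(t) = 1 follows from e^(-t_0) e^(t_0) = 1 and the binomial theorem.
   Put L := Z1 W0(t1)^-1, block strictly lower; then Z1 = L W0(t1), and as every row of L
   is finitely supported the products can be reassociated:
   Z2 = Z1 G = L W0(t1) G and U := Z2 W0(t2)^-T = L G(t) = L S1^-1 H S2^-T.
   So U S2^T = L (S1^-1 H) is block upper (U and S2^T are) and block strictly lower (L is,
   S1^-1 H is block lower), hence zero.  Invertibility of the diagonal blocks of H and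
   S1^-1 S1 = 1 then give L = 0, whence Z1 = Z2 = 0.  Nothing is used about W0(t2) beyond
   the convergence of the products in the hypotheses. *)

From HB Require Import structures.
From mathcomp Require Import all_boot all_order all_algebra.
From mathcomp Require Import complex.
From mathcomp Require Import all_classical all_reals all_analysis.
From mathcomp Require Import ring zify.
Set Implicit Arguments. Unset Strict Implicit. Unset Printing Implicit Defensive.
Import Order.TTheory GRing.Theory Num.Theory.
Import numFieldNormedType.Exports.
Local Open Scope ring_scope.
Local Open Scope classical_set_scope.

Section BlockSums.
Variables (R : realType) (D : nat).
Local Notation C := (Cx R).
Local Notation sm := (smat R D).
Implicit Types (b c d e : mi D) (F G : mi D -> C).

Lemma mdeg_ffun K (f : {ffun 'I_D -> 'I_K.+1}) :
  mdeg [ffun i => (f i : nat)] = (\sum_(i < D) (f i : nat))%N.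
Proof. by apply: eq_bigr => i _; rewrite ffunE. Qed.

Lemma leq_mdeg d i : (d i <= mdeg d)%N.
Proof. by rewrite /mdeg (bigD1 i) //= leq_addr. Qed.

Lemma bsum_ext N F G :
  (forall d, (mdeg d <= N)%N -> F d = G d) -> bsum N F = bsum N G.
Proof. by move=> FG; apply: eq_bigr => f; rewrite -mdeg_ffun; apply: FG. Qed.

Lemma bsum_eq0 N F : (forall d, (mdeg d <= N)%N -> F d = 0) -> bsum N F = 0.
Proof. by move=> F0; rewrite (bsum_ext F0) /bsum big1. Qed.

Lemma bsum_widen N K F : (N <= K)%N ->
  (forall d, (N < mdeg d)%N -> F d = 0) -> bsum K F = bsum N F.
Proof.
move=> NK F0; rewrite /bsum.
rewrite (bigID (fun f : {ffun 'I_D -> 'I_K.+1} => \sum_(i < D) (f i : nat) <= N)%N) /=.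
rewrite [X in _ + X]big1 ?addr0 => [|f /andP[_]]; last first.
  by rewrite -mdeg_ffun -ltnNge; apply: F0.
pose h (f : {ffun 'I_D -> 'I_N.+1}) : {ffun 'I_D -> 'I_K.+1} :=
  [ffun i => widen_ord (NK : (N < K.+1)%N) (f i)].
pose h' (g : {ffun 'I_D -> 'I_K.+1}) : {ffun 'I_D -> 'I_N.+1} :=
  [ffun i => inord (g i)].
have hE f : [ffun i => (h f i : nat)] = [ffun i => (f i : nat)].
  by apply/ffunP => i; rewrite !ffunE.
rewrite (reindex_onto h h') => [|g /andP[_ gN]]; last first.
  apply/ffunP => i; apply/val_inj; rewrite !ffunE /= inordK // ltnS.
  by apply: leq_trans gN; rewrite -mdeg_ffun (leq_trans _ (leq_mdeg _ i)) ?ffunE.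
apply: eq_big => [f|f _]; last by rewrite hE.
rewrite -!mdeg_ffun hE; case: (leqP _ N) => [fN|_]; last by rewrite andbF.
rewrite (leq_trans fN NK) /=; apply/eqP/ffunP => i; apply/val_inj.
by rewrite !ffunE /= inordK.
Qed.

Lemma eq_bsum_supp N K F : (forall d, (N < mdeg d)%N -> F d = 0) ->
  (forall d, (K < mdeg d)%N -> F d = 0) -> bsum N F = bsum K F.
Proof.
move=> FN FK; have [NK|/ltnW KN] := leqP N K.
  by rewrite (bsum_widen NK FN).
by rewrite (bsum_widen KN FK).
Qed.

Lemma bsum_cvg M F : (forall d, (M < mdeg d)%N -> F d = 0) ->
  (fun N => bsum N F) @ \oo --> bsum M F.
Proof. by move=> F0; apply: cvg_near_cst; exists M => // N /= MN; apply: bsum_widen. Qed.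

Lemma limn_bsum M F : (forall d, (M < mdeg d)%N -> F d = 0) ->
  limn (fun N => bsum N F) = bsum M F.
Proof. by move=> F0; apply: cvg_lim => //; apply: bsum_cvg. Qed.

Lemma bsum_kronl N b F : (mdeg b <= N)%N ->
  bsum N (fun d => (b == d)%:R * F d) = F b.
Proof.
move=> bN; rewrite /bsum.
pose fb : {ffun 'I_D -> 'I_N.+1} := [ffun i => inord (b i)].
have fbE : [ffun i => (fb i : nat)] = b.
  apply/ffunP => i; rewrite !ffunE inordK // ltnS.
  exact: leq_trans (leq_mdeg b i) bN.
rewrite (bigD1 fb) /= -?mdeg_ffun ?fbE // eqxx mul1r big1 ?addr0 // => f /andP[_ ffb].
rewrite (_ : b == _ = false) ?mul0r //; apply: contraNF ffb => /eqP bf.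
by apply/eqP/ffunP => i; apply/val_inj; rewrite ffunE bf ffunE /= inordK.
Qed.

Lemma bsum_kronr N c F : (mdeg c <= N)%N ->
  bsum N (fun d => F d * (d == c)%:R) = F c.
Proof.
move=> cN; rewrite -(bsum_kronl F cN).
by apply: bsum_ext => d _; rewrite mulrC eq_sym.
Qed.

Lemma mulr_bsumr N a F : a * bsum N F = bsum N (fun d => a * F d).
Proof. exact: mulr_sumr. Qed.

Lemma mulr_bsuml N a F : bsum N F * a = bsum N (fun d => F d * a).
Proof. exact: mulr_suml. Qed.

Lemma exchange_bsum N K (F : mi D -> mi D -> C) :
  bsum N (fun d => bsum K (F d)) = bsum K (fun e => bsum N (F^~ e)).
Proof. exact: exchange_big. Qed.

Lemma bsumD N F G : bsum N (fun d => F d + G d) = bsum N F + bsum N G.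
Proof. exact: big_split. Qed.

Lemma exchange_bsum_sum N m (F : 'I_m -> mi D -> C) :
  bsum N (fun d => \sum_(j < m) F j d) = \sum_(j < m) bsum N (F j).
Proof. exact: exchange_big. Qed.

Lemma bsum_mulA N K (x : mi D -> C) (Y : sm) (z : mi D -> C) :
  bsum N (fun e => bsum K (fun d => x d * Y d e) * z e) =
  bsum K (fun d => x d * bsum N (fun e => Y d e * z e)).
Proof.
transitivity (bsum N (fun e => bsum K (fun d => x d * Y d e * z e))).
  by apply: bsum_ext => e _; rewrite mulr_bsuml.
rewrite exchange_bsum; apply: bsum_ext => d _; rewrite mulr_bsumr.
by apply: bsum_ext => e _; rewrite mulrA.
Qed.

Lemma blocksum_ext k F G :
  (forall d, mdeg d = k -> F d = G d) -> blocksum k F = blocksum k G.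
Proof. by move=> FG; apply: eq_bigr => f /eqP fk; apply: FG; rewrite mdeg_ffun. Qed.

Lemma blocksum_eq0 k F : (forall d, mdeg d = k -> F d = 0) -> blocksum k F = 0.
Proof. by move=> F0; rewrite (blocksum_ext F0) /blocksum big1. Qed.

Lemma mulr_blocksumr k a F : a * blocksum k F = blocksum k (fun d => a * F d).
Proof. exact: mulr_sumr. Qed.

Lemma exchange_blocksum_bsum k N (F : mi D -> mi D -> C) :
  blocksum k (fun c => bsum N (F c)) = bsum N (fun d => blocksum k (F^~ d)).
Proof. exact: exchange_big. Qed.

Lemma cvg_bsum K (u : mi D -> nat -> C) (l : mi D -> C) :
  (forall d, u d @ \oo --> l d) ->
  (fun n => bsum K (fun d => u d n)) @ \oo --> bsum K l.
Proof. by move=> ul; apply: cvg_big => //; exact: add_continuous. Qed.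

End BlockSums.

Section Products.
Variables (R : realType) (D : nat).
Local Notation C := (Cx R).
Local Notation sm := (smat R D).
Implicit Types (b c d e f : mi D) (A X Y Z P Q V W L : sm).

Lemma mmul_to_bsum X Y P b c M : mmul_to X Y P ->
  (forall d, (M < mdeg d)%N -> X b d * Y d c = 0) ->
  P b c = bsum M (fun d => X b d * Y d c).
Proof. by move=> /(_ b c) XY F0; rewrite -(limn_bsum F0); apply/esym; apply: cvg_lim. Qed.

Lemma mmul_bsum X Y b c M : (forall d, (M < mdeg d)%N -> X b d * Y d c = 0) ->
  mmul X Y b c = bsum M (fun d => X b d * Y d c).
Proof. exact: limn_bsum. Qed.

Lemma mmul_to_assoc_row X A Y Z P Q b c K :
  (forall d, X b d = bsum K (fun e => A b e * Y e d)) ->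
  mmul_to Y Z P -> mmul_to X Z Q -> Q b c = bsum K (fun e => A b e * P e c).
Proof.
move=> XE YZ /(_ b c) XZ.
have XZE : (fun N => bsum N (fun d => X b d * Z d c)) =
           (fun N => bsum K (fun e => A b e * bsum N (fun d => Y e d * Z d c))).
  by apply/funext => N; rewrite -bsum_mulA; apply: bsum_ext => d _; rewrite XE.
rewrite XZE in XZ; rewrite -(cvg_lim _ XZ) //.
apply: cvg_lim; first exact: norm_hausdorff.
by apply: cvg_bsum => e; apply: cvgMl_tmp; apply: YZ.
Qed.

Lemma mmul_to_upperK V W Z L :
  block_upper V ->
  (forall b c, bsum (mdeg c) (fun e => V b e * W e c) = (b == c)%:R) ->
  mmul_to Z V L -> forall b d, Z b d = bsum (mdeg d) (fun e => L b e * W e d).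
Proof.
move=> Vup VW ZV b d.
have LE e : (mdeg e <= mdeg d)%N ->
    L b e = bsum (mdeg d) (fun f => Z b f * V f e).
  move=> ed; rewrite (mmul_to_bsum (M := mdeg e) ZV) => [|f ef]; last first.
    by rewrite Vup ?mulr0.
  by apply/esym/bsum_widen => // f ef; rewrite Vup ?mulr0.
rewrite -(bsum_kronr (Z b) (leqnn (mdeg d))).
under bsum_ext do rewrite -VW.
by rewrite -bsum_mulA; apply: bsum_ext => e ed; rewrite LE.
Qed.

Lemma row_block_diag_invertible_eq0 H (x : mi D -> C) n :
  block_diag_invertible H -> (forall d, (n < mdeg d)%N -> x d = 0) ->
  (forall c, bsum n (fun f => x f * H f c) = 0) -> forall d, x d = 0.
Proof.
move=> [Hdiag [K [_ [HK _]]]] x0 xH0 d; have [dn|/x0 //] := leqP (mdeg d) n.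
have HKE f : blocksum (mdeg d) (fun c => H f c * K c d) = (f == d)%:R.
  have [fd|fd] := eqVneq (mdeg f) (mdeg d); first by rewrite -fd HK.
  rewrite blocksum_eq0 => [|c cd]; last by rewrite Hdiag ?mul0r // cd.
  by rewrite (_ : f == d = false) //; apply: contraNF fd => /eqP ->.
rewrite -(bsum_kronr x dn); under bsum_ext do rewrite -HKE.
transitivity (blocksum (mdeg d) (fun c => bsum n (fun f => x f * H f c) * K c d)).
  rewrite (blocksum_ext (G := fun c => bsum n (fun f => x f * (H f c * K c d))));
    last by move=> c _; rewrite mulr_bsuml; apply: bsum_ext => f _; rewrite mulrA.
  by rewrite exchange_blocksum_bsum; apply: bsum_ext => f _; rewrite mulr_blocksumr.
by apply: blocksum_eq0 => c _; rewrite xH0 mul0r.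
Qed.

End Products.

Section GaussBorelUniqueness.
Variables (R : realType) (D : nat).
Local Notation sm := (smat R D).
Variables (S1 S2 S1inv S2inv H Gt : sm).
Implicit Types (b c d e f : mi D) (L U : sm).
Hypotheses (S2_lower : block_lower S2) (S1inv_lower : block_lower S1inv).
Hypotheses (S2S2inv : mmul_to S2 S2inv (sone R D))
  (S1invS1 : mmul_to S1inv S1 (sone R D)).
Hypotheses (H_inv : block_diag_invertible H)
  (GtE : Gt = mmul (mmul S1inv H) (mtr S2inv)).

Local Notation M := (mmul S1inv H).

Lemma mmul_lower_diag_bsum b e : M b e = bsum (mdeg b) (fun d => S1inv b d * H d e).
Proof. by apply: mmul_bsum => d bd; rewrite S1inv_lower ?mul0r. Qed.

Lemma mmul_lower_diag_lower : block_lower M.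
Proof.
have [Hdiag _] := H_inv; move=> b e be; rewrite mmul_lower_diag_bsum.
by apply: bsum_eq0 => d db; rewrite Hdiag ?mulr0 // neq_ltn (leq_ltn_trans db be).
Qed.

Lemma factor_mul_trS2 e c : bsum (mdeg c) (fun d => Gt e d * S2 c d) = M e c.
Proof.
have S2K f : bsum (mdeg c) (fun d => S2inv d f * S2 c d) = (c == f)%:R.
  rewrite -[_%:R]/(sone R D c f) (mmul_to_bsum (M := mdeg c) S2S2inv) => [|d cd].
    by apply: bsum_ext => d _; rewrite mulrC.
  by rewrite S2_lower ?mul0r.
have GtE' d : Gt e d = bsum (mdeg e) (fun f => M e f * S2inv d f).
  by rewrite GtE; apply: mmul_bsum => f ef; rewrite mmul_lower_diag_lower ?mul0r.
under bsum_ext do rewrite GtE'.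
rewrite (bsum_mulA _ _ (M e) (mtr S2inv)); under bsum_ext do rewrite S2K.
have [ce|ec] := leqP (mdeg c) (mdeg e).
  by rewrite -(bsum_kronr (M e) ce); apply: bsum_ext => f _; rewrite eq_sym.
rewrite mmul_lower_diag_lower // bsum_eq0 // => f fe.
by rewrite (_ : c == f = false) ?mulr0 //; apply: contraTF fe => /eqP <-; rewrite -ltnNge.
Qed.

Lemma strictly_lower_mul_lower_diag_eq0 L U b c :
  block_strictly_lower L -> block_upper U ->
  (forall b c, U b c = bsum (mdeg b) (fun e => L b e * Gt e c)) ->
  bsum (mdeg b) (fun e => L b e * M e c) = 0.
Proof.
move=> Lsl Uup UE; have [cb|bc] := ltnP (mdeg c) (mdeg b).
  transitivity (bsum (mdeg c) (fun d => U b d * S2 c d)).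
    under [RHS]bsum_ext do rewrite UE.
    by rewrite bsum_mulA; apply: bsum_ext => e _; rewrite factor_mul_trS2.
  by apply: bsum_eq0 => d dc; rewrite Uup ?mul0r // (leq_ltn_trans dc cb).
apply: bsum_eq0 => e eb; have [be|eb'] := leqP (mdeg b) (mdeg e).
  by rewrite Lsl ?mul0r.
by rewrite mmul_lower_diag_lower ?mulr0 // (leq_trans eb').
Qed.

Lemma strictly_lower_mul_factor_eq0 L U :
  block_strictly_lower L -> block_upper U ->
  (forall b c, U b c = bsum (mdeg b) (fun e => L b e * Gt e c)) -> L = szero R D.
Proof.
move=> Lsl Uup UE; apply/funext => b; apply/funext => c.
pose x d := bsum (mdeg b) (fun e => L b e * S1inv e d).
have x0 : forall d, x d = 0.
  apply: (row_block_diag_invertible_eq0 (n := mdeg b) H_inv) => [d bd|c'].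
    by apply: bsum_eq0 => e eb; rewrite S1inv_lower ?mulr0 // (leq_ltn_trans eb bd).
  rewrite -(strictly_lower_mul_lower_diag_eq0 b c' Lsl Uup UE) bsum_mulA.
  apply: bsum_ext => e eb; rewrite mmul_lower_diag_bsum (bsum_widen eb) // => f ef.
  by rewrite S1inv_lower ?mul0r.
have [bc|cb] := leqP (mdeg b) (mdeg c); first exact: Lsl.
rewrite -(bsum_kronr (L b) (ltnW cb)) /szero.
transitivity (bsum (mdeg b) (fun d => x d * S1 d c)); last first.
  by apply: bsum_eq0 => d _; rewrite x0 mul0r.
rewrite bsum_mulA; apply: bsum_ext => e eb.
rewrite -[_%:R]/(sone R D e c) (mmul_to_bsum (M := mdeg e) S1invS1) => [|d ed].
  by rewrite (bsum_widen eb) // => d ed; rewrite S1inv_lower ?mul0r.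
by rewrite S1inv_lower ?mul0r.
Qed.

End GaussBorelUniqueness.

Section ExpPartialSums.
Variable K : numFieldType.
Implicit Types (x y : K).

Definition exp_psum x n : K := \sum_(i < n) x ^+ i / i`!%:R.

Definition exp_tail x y n : K :=
  \sum_(i < n) \sum_(j < n | (n <= i + j)%N) x ^+ i / i`!%:R * (y ^+ j / j`!%:R).

Lemma natr_fact_neq0 n : (n`!%:R : K) != 0.
Proof. by rewrite pnatr_eq0 -lt0n fact_gt0. Qed.

Lemma exp_psum0 n : exp_psum 0 n.+1 = 1.
Proof.
rewrite /exp_psum big_ord_recl /= expr0 divr1 big1 ?addr0 // => i _.
by rewrite expr0n /= mul0r.
Qed.

Lemma sum_exp_coeffM x y s :
  \sum_(i < s.+1) x ^+ i / i`!%:R * (y ^+ (s - i) / (s - i)`!%:R) =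
  (x + y) ^+ s / s`!%:R.
Proof.
rewrite addrC exprDn mulr_suml; apply: eq_bigr => i _.
have si : (i <= s)%N by rewrite -ltnS.
rewrite -mulr_natr -(bin_fact si) !natrM.
have binC : ('C(s, i)%:R : K) != 0 by rewrite pnatr_eq0 -lt0n bin_gt0.
by field; rewrite !natr_fact_neq0 binC.
Qed.

Lemma sum_triangle n (F : nat -> nat -> K) :
  \sum_(i < n) \sum_(j < n | (i + j < n)%N) F i j =
  \sum_(s < n) \sum_(i < s.+1) F i (s - i)%N.
Proof.
transitivity (\sum_(i < n) \sum_(s < n) (if (i <= s)%N then F i (s - i)%N else 0)).
  apply: eq_bigr => i _; rewrite -big_mkcond /=.
  transitivity (\sum_(0 <= j < n - i) F i j).
    rewrite big_mkord (@big_ord_widen_cond _ _ _ (n - i) n xpredT (F i)) ?leq_subr //.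
    by apply: eq_bigl => j /=; rewrite ltn_subRL.
  rewrite -(big_geq_mkord i n xpredT (fun s => F i (s - i)%N)).
  have := big_addn 0 n i xpredT (fun s => F i (s - i)%N); rewrite add0n => ->.
  by apply: eq_bigr => j _; rewrite addnK.
rewrite exchange_big /=; apply: eq_bigr => s _; rewrite -big_mkcond /=.
by rewrite (@big_ord_widen_cond _ _ _ s.+1 n xpredT (fun i => F i (s - i)%N)).
Qed.

Lemma sumr_ord_widen0 m n (F : nat -> K) : (m <= n)%N ->
  (forall j, (m <= j)%N -> F j = 0) -> \sum_(j < n) F j = \sum_(j < m) F j.
Proof.
move=> mn F0; rewrite -!(big_mkord xpredT) (big_cat_nat (leq0n _) mn) /=.
rewrite [X in _ + X]big1_seq ?addr0 // => j /andP[_].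
by rewrite mem_index_iota => /andP[/F0].
Qed.

Lemma sum_binomial_succ (s : K) (v : nat -> K) k :
  \sum_(j < k.+2) 'C(k.+1, j)%:R * s ^+ (k.+1 - j) * v j =
  (\sum_(j < k.+1) 'C(k, j)%:R * s ^+ (k - j) * v j) * s +
  \sum_(j < k.+1) 'C(k, j)%:R * s ^+ (k - j) * v j.+1.
Proof.
rewrite big_ord_recl /= bin0 subn0.
under eq_bigr do rewrite /bump /= add1n binS natrD subSS mulrDl mulrDl.
rewrite big_split /= addrA; congr (_ + _).
rewrite mulr_suml [in RHS]big_ord_recl /= bin0 subn0.
congr (_ + _); first by rewrite exprSr; ring.
rewrite big_ord_recr /= bin_small // mul0r mul0r addr0.
apply: eq_bigr => j _; rewrite /bump /= add1n.
have -> : (k - j = (k - j.+1).+1)%N by move: (ltn_ord j); lia.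
by rewrite exprSr; ring.
Qed.

Lemma sum_binomial_exp_psum (s : K) j n :
  \sum_(k < n) 'C(k, j)%:R * s ^+ (k - j) / k`!%:R = j`!%:R^-1 * exp_psum s (n - j).
Proof.
have [nj|jn] := leqP n j.
  rewrite (_ : n - j = 0)%N; last by apply/eqP; rewrite subn_eq0.
  rewrite /exp_psum big_ord0 mulr0 big1 // => k _.
  by rewrite bin_small ?mul0r // (leq_trans (ltn_ord k) nj).
rewrite -(big_mkord xpredT (fun k => 'C(k, j)%:R * s ^+ (k - j) / k`!%:R)).
rewrite (big_cat_nat (leq0n j) (ltnW jn)) /= big_nat_cond big1 ?add0r; last first.
  by move=> k /andP[/andP[_ kj] _]; rewrite bin_small ?mul0r.
have := big_addn 0 n j xpredT (fun k => 'C(k, j)%:R * s ^+ (k - j) / k`!%:R).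
rewrite add0n => ->; rewrite /exp_psum big_mkord mulr_sumr; apply: eq_bigr => i _.
have binE := bin_fact (leq_addl i j); rewrite addnK in binE.
have binC : ('C(i + j, j)%:R : K) != 0 by rewrite pnatr_eq0 -lt0n bin_gt0 leq_addl.
rewrite addnK -binE !natrM.
by field; rewrite !natr_fact_neq0 binC.
Qed.

Lemma exp_psumM x y n :
  exp_psum x n * exp_psum y n = exp_psum (x + y) n + exp_tail x y n.
Proof.
pose F i j := x ^+ i / i`!%:R * (y ^+ j / j`!%:R).
transitivity (\sum_(i < n) (\sum_(j < n | (i + j < n)%N) F i j
                            + \sum_(j < n | (n <= i + j)%N) F i j)).
  rewrite /exp_psum mulr_suml; apply: eq_bigr => i _; rewrite mulr_sumr.
  rewrite (bigID (fun j : 'I_n => (i + j < n)%N)) /=; congr (_ + _).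
  by apply: eq_bigl => j; rewrite -leqNgt.
rewrite big_split /= sum_triangle; congr (_ + _).
by apply: eq_bigr => s _; rewrite sum_exp_coeffM.
Qed.

Lemma norm_exp_tail x y n : `|exp_tail x y n| <= exp_tail `|x| `|y| n.
Proof.
apply: le_trans (ler_norm_sum _ _ _) _; apply: ler_sum => i _.
apply: le_trans (ler_norm_sum _ _ _) _; apply: ler_sum => j _.
by rewrite normrM !normf_div !normrX !normr_nat.
Qed.

Lemma norm_le_cvg0 (u v : nat -> K) :
  (forall n, `|u n| <= v n) -> v @ \oo --> 0 -> u @ \oo --> 0.
Proof.
move=> uv /cvgrPdist_lt v0; apply/cvgrPdist_lt => e e0.
apply: filterS (v0 e e0) => n; rewrite !sub0r !normrN => ve.
by apply: le_lt_trans (uv n) _; rewrite -[v n]ger0_norm // (le_trans _ (uv n)).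
Qed.

End ExpPartialSums.

Section ComplexExp.
Variable R : realType.
Local Notation C := (Cx R).
Local Open Scope complex_scope.
Implicit Types (z w : C).

Lemma norm_realC (x : R) : `|x%:C : C| = `|x|%:C.
Proof. by rewrite normc_def /= expr0n addr0 sqrtr_sqr. Qed.

Lemma cvg_realC (u : nat -> R) (l : R) :
  u @ \oo --> l -> (fun n => (u n)%:C : C) @ \oo --> (l%:C : C).
Proof.
move/cvgrPdist_lt => ul; apply/cvgrPdist_lt => e e0.
move: (e0); rewrite ltcE /= => /andP[/eqP eIm eRe].
apply: filterS (ul _ eRe) => n ule.
rewrite -rmorphB norm_realC; move: eIm ule {e0 eRe}; case: e => a b /= -> ule.
by rewrite ltcR.
Qed.

Lemma exp_psum_realC (x : R) n : exp_psum (x%:C : C) n = (exp_psum x n)%:C.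
Proof.
rewrite /exp_psum rmorph_sum; apply: eq_bigr => i _.
by rewrite fmorph_div rmorphXn rmorph_nat.
Qed.

Lemma cvg_exp_psumR (x : R) : exp_psum x @ \oo --> expR x.
Proof.
have -> : exp_psum x = series (exp_coeff x).
  by apply/funext => n; rewrite /exp_psum /series /= big_mkord.
exact: is_cvg_series_exp_coeff.
Qed.

Definition normcR z : R := Num.sqrt (complex.Re z ^+ 2 + complex.Im z ^+ 2).

Lemma normcRX z i : normcR (z ^+ i) = normcR z ^+ i.
Proof.
have normcE w : `|w| = (normcR w)%:C by exact: normc_def.
have h : ((normcR (z ^+ i))%:C : C) = ((normcR z ^+ i)%:C : C).
  by rewrite rmorphXn -normcE normrX normcE.
exact: complexI h.
Qed.

Lemma Re_le_normcR z : `|complex.Re z| <= normcR z.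
Proof.
rewrite /normcR -sqrtr_sqr ler_sqrt ?lerDl ?sqr_ge0 //.
by rewrite addr_ge0 ?sqr_ge0.
Qed.

Lemma Im_le_normcR z : `|complex.Im z| <= normcR z.
Proof.
rewrite /normcR -sqrtr_sqr ler_sqrt ?lerDr ?sqr_ge0 //.
by rewrite addr_ge0 ?sqr_ge0.
Qed.

Lemma exp_psum_ReIm z n : exp_psum z n =
  ((\sum_(i < n) complex.Re (z ^+ i) / i`!%:R)%:C : C) +
  'i * ((\sum_(i < n) complex.Im (z ^+ i) / i`!%:R)%:C : C).
Proof.
rewrite /exp_psum !rmorph_sum mulr_sumr -big_split; apply: eq_bigr => i _ /=.
by rewrite !fmorph_div !rmorph_nat {1}[z ^+ i]complexE mulrDl -mulrA.
Qed.

Lemma cvgn_exp_series_part (f : C -> R) z : (forall w, `|f w| <= normcR w) ->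
  cvgn (fun n => \sum_(i < n) f (z ^+ i) / i`!%:R).
Proof.
move=> fle; have -> : (fun n => \sum_(i < n) f (z ^+ i) / i`!%:R) =
    series (fun i => f (z ^+ i) / i`!%:R).
  by apply/funext => n; rewrite /series /= big_mkord.
apply: (@normed_cvg _ R^o).
apply: (@series_le_cvg _ _ (exp_coeff (normcR z))) => [n|n|n|].
- exact: normr_ge0.
- exact/exp_coeff_ge0/sqrtr_ge0.
- rewrite /exp_coeff /= normf_div normr_nat -normcRX.
  by apply: ler_wpM2r; rewrite ?invr_ge0 ?ler0n.
- exact: is_cvg_series_exp_coeff.
Qed.

Definition expC z : C := lim (exp_psum z @ \oo).

Lemma cvg_expC z : exp_psum z @ \oo --> expC z.
Proof.
suff [l zl] : exists l : C, exp_psum z @ \oo --> l by exact: cvgP zl.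
eexists; have -> : exp_psum z = _ := funext (exp_psum_ReIm z).
apply: cvgD; first exact: cvg_realC (cvgn_exp_series_part (z := z) Re_le_normcR).
exact: cvgMl_tmp (cvg_realC (cvgn_exp_series_part (z := z) Im_le_normcR)).
Qed.

Lemma expC_mulN z : expC z * expC (- z) = 1.
Proof.
rewrite -(cvg_lim _ (cvgM (@cvg_expC z) (@cvg_expC (- z)))) //.
apply: cvg_lim; first exact: norm_hausdorff.
have psumM : exp_psum z \* exp_psum (- z) =1 exp_psum 0 \+ exp_tail z (- z).
  by move=> n; rewrite /= exp_psumM subrr.
rewrite (eq_cvg _ _ psumM) -[1]addr0; apply: cvgD.
  by apply: cvg_near_cst; exists 1%N => // n n1; rewrite -(prednK n1) exp_psum0.
(* the tail of the Cauchy product is dominated by the one of the real series at |z|,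
   which tends to e^|z| e^|z| - e^(2|z|) = 0 *)
apply: (@norm_le_cvg0 _ _ (exp_tail `|z| `|z|)) => [n|].
  by have := norm_exp_tail z (- z) n; rewrite normrN.
have tailE : exp_tail `|z| `|z| =1
    (fun n => exp_psum `|z| n * exp_psum `|z| n - exp_psum (`|z| + `|z|) n).
  by move=> n; rewrite exp_psumM addrAC subrr add0r.
have psumR x : exp_psum (x%:C : C) n @[n --> \oo] --> ((expR x)%:C : C).
  by rewrite (eq_cvg _ _ (exp_psum_realC x)); apply: cvg_realC; apply: cvg_exp_psumR.
set r := normcR z; have zr : `|z| = r%:C := normc_def z.
rewrite (eq_cvg _ _ tailE) zr -rmorphD.
have tail_cvg : exp_psum (r%:C : C) n * exp_psum r%:C n - exp_psum (r + r)%:C n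
    @[n --> \oo] --> ((expR r)%:C * (expR r)%:C - (expR (r + r))%:C : C).
  by apply: cvgB; [apply: cvgM|]; apply: psumR.
by rewrite expRD rmorphM subrr in tail_cvg.
Qed.

End ComplexExp.

Section NilpotentExp.
Variables (R : realType) (D : nat).
Local Notation C := (Cx R).
Local Notation sm := (smat R D).
Implicit Types (b c d e : mi D) (X Y Z N : sm).

Definition block_strictly_upper X := forall b c, (mdeg c <= mdeg b)%N -> X b c = 0.

Definition umul X Y : sm := fun b c => bsum (mdeg c) (fun d => X b d * Y d c).

Fixpoint upow N j : sm := if j is j'.+1 then umul (upow N j') N else sone R D.

Lemma mmul_upper X Y : block_upper Y -> mmul X Y = umul X Y.
Proof.
move=> Yup; apply/funext => b; apply/funext => c.
by apply: limn_bsum => d cd; rewrite Yup ?mulr0.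
Qed.

Lemma upow_eq0 N j b c : block_strictly_upper N ->
  (mdeg c < mdeg b + j)%N -> upow N j b c = 0.
Proof.
move=> Nsu; elim: j b c => [|j IH] b c /=.
  by rewrite addn0 /sone; case: eqP => // <-; rewrite ltnn.
move=> cbj; apply: bsum_eq0 => d dc; have [dbj|bjd] := ltnP (mdeg d) (mdeg b + j).
  by rewrite IH ?mul0r.
by rewrite Nsu ?mulr0 //; move: cbj bjd; lia.
Qed.

Lemma upow_upper N j : block_strictly_upper N -> block_upper (upow N j).
Proof. by move=> Nsu b c cb; rewrite upow_eq0 // ltn_addr. Qed.

Lemma umulr1 X : umul X (sone R D) = X.
Proof. by apply/funext => b; apply/funext => c; apply: bsum_kronr. Qed.

Lemma umulA X Y Z : block_upper Y -> umul (umul X Y) Z = umul X (umul Y Z).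
Proof.
move=> Yup; apply/funext => b; apply/funext => c; rewrite /umul -bsum_mulA.
apply: bsum_ext => e ec; congr (_ * _).
by apply/esym/bsum_widen => // d ed; rewrite Yup ?mulr0.
Qed.

Lemma upowD N i j : block_strictly_upper N ->
  upow N (i + j) = umul (upow N i) (upow N j).
Proof.
move=> Nsu; elim: j => [|j IH]; first by rewrite addn0 /= umulr1.
by rewrite addnS /= IH umulA //; apply: upow_upper.
Qed.

Lemma upowN N j b c : upow (mopp N) j b c = (-1) ^+ j * upow N j b c.
Proof.
elim: j b c => [|j IH] b c /=; first by rewrite mul1r.
rewrite /umul mulr_bsumr; apply: bsum_ext => d _.
by rewrite IH /mopp exprS; ring.
Qed.

Definition nilexp N : sm := fun b c =>
  \sum_(j < (mdeg c).+1) upow N j b c / j`!%:R.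

Lemma nilexp_upper N : block_strictly_upper N -> block_upper (nilexp N).
Proof.
by move=> Nsu b c cb; rewrite /nilexp big1 // => j _; rewrite upow_upper ?mul0r.
Qed.

Lemma bsum_nilexpNM N b c : block_strictly_upper N ->
  bsum (mdeg c) (fun e => nilexp (mopp N) b e * nilexp N e c) =
  \sum_(i < (mdeg c).+1) \sum_(j < (mdeg c).+1)
    (-1) ^+ i / i`!%:R * (1 ^+ j / j`!%:R) * upow N (i + j) b c.
Proof.
move=> Nsu; set m := mdeg c.
transitivity (bsum m (fun e => \sum_(i < m.+1) \sum_(j < m.+1)
    (-1) ^+ i / i`!%:R * (1 ^+ j / j`!%:R) * (upow N i b e * upow N j e c))).
  apply: bsum_ext => e em; rewrite /nilexp mulr_suml.
  rewrite -(@sumr_ord_widen0 _ (mdeg e).+1 m.+1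
    (fun i => upow (mopp N) i b e / i`!%:R * nilexp N e c)) => [|//|i ei]; last first.
    by rewrite upowN upow_eq0 ?mulr0 ?mul0r // (leq_trans ei) ?leq_addl.
  apply: eq_bigr => i _; rewrite /nilexp mulr_sumr; apply: eq_bigr => j _.
  by rewrite upowN expr1n; field; rewrite !natr_fact_neq0.
rewrite exchange_bsum_sum; apply: eq_bigr => i _.
rewrite exchange_bsum_sum; apply: eq_bigr => j _.
by rewrite (upowD _ _ Nsu) /umul mulr_bsumr.
Qed.

Lemma nilexpNK N b c : block_strictly_upper N ->
  bsum (mdeg c) (fun e => nilexp (mopp N) b e * nilexp N e c) = (b == c)%:R.
Proof.
move=> Nsu; rewrite bsum_nilexpNM //; set m := mdeg c.
pose F i j := (-1) ^+ i / i`!%:R * (1 ^+ j / j`!%:R) * upow N (i + j) b c.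
transitivity (\sum_(i < m.+1) \sum_(j < m.+1 | (i + j < m.+1)%N) F i j).
  apply: eq_bigr => i _; rewrite [RHS]big_mkcond /=; apply: eq_bigr => j _.
  by case: ltnP => // mij; rewrite /F upow_eq0 ?mulr0 // (leq_trans mij) ?leq_addl.
rewrite sum_triangle big_ord_recl /= [X in _ + X]big1 ?addr0 => [|s _].
  by rewrite big_ord1 /F /= fact0 !expr0 divr1 !mul1r.
(* the coefficient of [N ^+ s.+1] is [(-1 + 1) ^+ s.+1 / s.+1`!] *)
rewrite /bump /= add1n.
transitivity (\sum_(i < s.+2) ((-1) ^+ i / i`!%:R * (1 ^+ (s.+1 - i) / (s.+1 - i)`!%:R))
                * upow N s.+1 b c).
  by apply: eq_bigr => i _; rewrite /F subnKC // -ltnS.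
by rewrite -mulr_suml sum_exp_coeffM addNr expr0n /= !mul0r.
Qed.

Section ScalarPlusStrictlyUpper.
Variables (B N : sm) (s : C).
Hypotheses (BE : forall b c, B b c = s * (b == c)%:R + N b c)
  (Nsu : block_strictly_upper N).

Lemma scalar_plus_upper : block_upper B.
Proof.
move=> b c cb; rewrite BE Nsu ?(ltnW cb) // addr0.
by case: eqP cb => [<-|_]; rewrite ?ltnn ?mulr0.
Qed.

Lemma mpow_scalar_plus k b c :
  mpow B k b c = \sum_(j < k.+1) 'C(k, j)%:R * s ^+ (k - j) * upow N j b c.
Proof.
elim: k b c => [|k IH] b c; first by rewrite big_ord1 /= mul1r expr0 mul1r.
rewrite /= (mmul_upper _ scalar_plus_upper) /umul.
rewrite (sum_binomial_succ s (fun j => upow N j b c)).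
under bsum_ext do rewrite BE mulrDr.
rewrite bsumD; congr (_ + _).
  under bsum_ext do rewrite mulrA.
  by rewrite bsum_kronr // IH.
under bsum_ext do rewrite IH mulr_suml.
rewrite exchange_bsum_sum; apply: eq_bigr => j _ /=; rewrite /umul mulr_bsumr.
by apply: bsum_ext => d _; rewrite mulrA.
Qed.

Lemma exp_psum_mpow b c n :
  \sum_(k < n) mpow B k b c / k`!%:R =
  \sum_(j < (mdeg c).+1) upow N j b c / j`!%:R * exp_psum s (n - j).
Proof.
set m := mdeg c.
transitivity (\sum_(k < n) \sum_(j < m.+1)
    upow N j b c * ('C(k, j)%:R * s ^+ (k - j) / k`!%:R)).
  apply: eq_bigr => k _; rewrite mpow_scalar_plus mulr_suml.
  rewrite -(@sumr_ord_widen0 _ k.+1 (k + m).+1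
     (fun j => 'C(k, j)%:R * s ^+ (k - j) * upow N j b c / k`!%:R)) => [||j kj].
  - rewrite -(@sumr_ord_widen0 _ m.+1 (k + m).+1
       (fun j => upow N j b c * ('C(k, j)%:R * s ^+ (k - j) / k`!%:R))) => [||j mj].
    + by apply: eq_bigr => j _; ring.
    + by rewrite ltnS leq_addl.
    + by rewrite upow_eq0 ?mul0r // (leq_trans mj) ?leq_addl.
  - by rewrite ltnS leq_addr.
  - by rewrite bin_small ?mul0r.
rewrite exchange_big /=; apply: eq_bigr => j _.
by rewrite -mulr_sumr sum_binomial_exp_psum mulrA.
Qed.

Lemma mexp_scalar_plus b c : mexp B b c = expC s * nilexp N b c.
Proof.
rewrite /mexp; under eq_fun do rewrite exp_psum_mpow.
rewrite /nilexp mulr_sumr; apply: cvg_lim; first exact: norm_hausdorff.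
apply: cvg_big => [|j _]; first exact: add_continuous.
rewrite [expC s * _]mulrC; apply: cvgMl_tmp.
by have := @cvg_expC _ s; rewrite -(cvg_centern j).
Qed.

End ScalarPlusStrictlyUpper.

End NilpotentExp.

Section SpectralExp.
Variables (R : realType) (D : nat).
Local Notation C := (Cx R).
Local Notation sm := (smat R D).
Implicit Types (a b c d e : mi D) (t : mi D -> C).

Definition mi0 : mi D := [ffun => 0%N].

Lemma mdeg_madd b a : mdeg (madd b a) = (mdeg b + mdeg a)%N.
Proof. by rewrite /mdeg -big_split; apply: eq_bigr => i _; rewrite ffunE. Qed.

Lemma mdeg_mi0 : mdeg mi0 = 0%N.
Proof. by rewrite /mdeg big1 // => i _; rewrite ffunE. Qed.

Lemma mdeg_eq0 a : (mdeg a == 0%N) = (a == mi0).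
Proof.
apply/eqP/eqP => [a0|->]; last exact: mdeg_mi0.
by apply/ffunP => i; rewrite ffunE; apply/eqP; rewrite -leqn0 -a0 leq_mdeg.
Qed.

Lemma madd0 b : madd b mi0 = b.
Proof. by apply/ffunP => i; rewrite !ffunE addn0. Qed.

Lemma tLam_lower t b c : (mdeg c <= mdeg b)%N -> tLam t b c = t mi0 * (b == c)%:R.
Proof.
move=> cb; rewrite /tLam (limn_bsum (M := mdeg c)) => [|a ca]; last first.
  by rewrite /Lam; case: eqP ca => [<-|_]; rewrite ?mulr0 // mdeg_madd ltnNge leq_addl.
have mi0c : (mdeg mi0 <= mdeg c)%N by rewrite mdeg_mi0.
rewrite -[RHS](bsum_kronl (fun a => t a * (b == c)%:R) mi0c).
apply: bsum_ext => a _; have [<-|a0] := eqVneq mi0 a; first by rewrite /Lam madd0 mul1r.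
rewrite mul0r /Lam; case: eqP => [bac|]; last by rewrite mulr0.
have : mdeg a != 0%N by rewrite mdeg_eq0 eq_sym.
by move: cb; rewrite -bac mdeg_madd; lia.
Qed.

Definition tLam_strict t : sm := fun b c => tLam t b c - t mi0 * (b == c)%:R.

Lemma tLam_strict_upper t : block_strictly_upper (tLam_strict t).
Proof. by move=> b c cb; rewrite /tLam_strict tLam_lower // subrr. Qed.

Lemma W0E t b c : W0 t b c = expC (t mi0) * nilexp (tLam_strict t) b c.
Proof.
apply: mexp_scalar_plus (tLam_strict_upper t) b c => b' c'.
by rewrite /tLam_strict addrC subrK.
Qed.

Lemma W0invE t b c : W0inv t b c = expC (- t mi0) * nilexp (mopp (tLam_strict t)) b c.
Proof.
apply: mexp_scalar_plus => [b' c'|b' c' cb]; first by rewrite /mopp /tLam_strict; ring.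
by rewrite /mopp tLam_strict_upper ?oppr0.
Qed.

Lemma W0_upper t : block_upper (W0 t).
Proof.
by move=> b c cb; rewrite W0E nilexp_upper ?mulr0 //; apply: tLam_strict_upper.
Qed.

Lemma W0inv_upper t : block_upper (W0inv t).
Proof.
move=> b c cb; rewrite W0invE nilexp_upper ?mulr0 // => b' c' cb'.
by rewrite /mopp tLam_strict_upper ?oppr0.
Qed.

Lemma W0invK t b c : bsum (mdeg c) (fun e => W0inv t b e * W0 t e c) = (b == c)%:R.
Proof.
rewrite -(nilexpNK b c (tLam_strict_upper t)) -[RHS]mul1r -(expC_mulN (t mi0)) mulrC.
rewrite mulr_bsuml; apply: bsum_ext => e _; rewrite W0invE W0E; ring.
Qed.

End SpectralExp.

Theorem mainTheorem9 (R : realType) (D : nat) (t1 t2 : mi D -> Cx R)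
    (G WG Gt S1 S2 S1inv S2inv H Z1 Z2 : smat R D) :
  (* G(t) = W_1^{(0)}(t_1) G (W_2^{(0)}(t_2))^{-T}, computed as (W_1 G) W_2^{-T} *)
  mmul_to (W0 t1) G WG ->
  mmul_to WG (mtr (W0inv t2)) Gt ->
  (* block Gauss--Borel factorization G(t) = S_1^{-1} H S_2^{-T} *)
  block_lower_unitri S1 -> block_lower_unitri S2 ->
  block_lower S1inv -> mmul_to S1 S1inv (sone R D) -> mmul_to S1inv S1 (sone R D) ->
  block_lower S2inv -> mmul_to S2 S2inv (sone R D) -> mmul_to S2inv S2 (sone R D) ->
  block_diag_invertible H ->
  Gt = mmul (mmul S1inv H) (mtr S2inv) ->
  (* hypotheses on Z_1(t), Z_2(t) *)
  (exists L, mmul_to Z1 (W0inv t1) L /\ block_strictly_lower L) ->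
  (exists U, mmul_to Z2 (mtr (W0inv t2)) U /\ block_upper U) ->
  mmul_to Z1 G Z2 ->
  Z1 = szero R D /\ Z2 = szero R D.
Proof.
move=> W1G WGW2 _ [S2_lower _] S1inv_lower _ S1invS1 _ S2S2inv _ H_inv GtE
  [L [Z1W1 L_sl]] [U [Z2W2 U_up]] Z1G.
have Z1E b d : Z1 b d = bsum (mdeg b) (fun e => L b e * W0 t1 e d).
  rewrite (mmul_to_upperK (@W0inv_upper _ _ t1) (W0invK t1) Z1W1).
  apply: eq_bsum_supp => e ?; first by rewrite W0_upper ?mulr0.
  by rewrite L_sl ?mul0r // ltnW.
have Z2E b c : Z2 b c = bsum (mdeg b) (fun e => L b e * WG e c).
  exact: mmul_to_assoc_row (Z1E b) W1G Z1G.
have UE b c : U b c = bsum (mdeg b) (fun e => L b e * Gt e c).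
  exact: mmul_to_assoc_row (Z2E b) WGW2 Z2W2.
have L0 := strictly_lower_mul_factor_eq0 S2_lower S1inv_lower S2S2inv S1invS1 H_inv GtE
  L_sl U_up UE.
by split; apply/funext => b; apply/funext => c; rewrite ?Z1E ?Z2E;
  apply: bsum_eq0 => e _; rewrite L0 /szero mul0r.
Qed.
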